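(* Consider the flat $G(3)$-contact supergeometry on $J^1=J^1(\mathbb{C}^{2|2},\mathbb{C}^{1|0})$ (defined in the context) and let $\mathcal{E}=\widehat{\mathcal V}\subset J^2(\mathbb{C}^{2|2},\mathbb{C}^{1|0})$ be the collection of affine tangent spaces along its field of $(1|2)$-twisted cubics $\mathcal V$. Then $\mathcal E$ is a sub-supermanifold of dimension $(6|6)$ and it is given by the $G(3)$-contact super-PDE system $$u_{xx}=\tfrac13u_{yy}^3+2u_{yy}u_{y\nu}u_{y\tau},\quad u_{xy}=\tfrac12u_{yy}^2+u_{y\nu}u_{y\tau},\quad u_{x\nu}=u_{yy}u_{y\nu},\quad u_{x\tau}=u_{yy}u_{y\tau},\quad u_{\nu\tau}=-u_{yy}.$$
   Context: $J^1=J^1(\mathbb{C}^{2|2},\mathbb{C}^{1|0})$ has coordinates $(x^0,x^1,x^2,x^3,u,u_0,\dots,u_3)=(x,y,\nu,\tau,u,u_x,u_y,u_\nu,u_\tau)$, with $x,y,u,u_x,u_y$ even and the others odd; it has contact form $\sigma=du-\sum_i(dx^i)u_i$ and contact distribution $\mathcal C=\ker\sigma$ with flat frame $D_i=\partial_{x^i}+u_i\partial_u$, $U^i=\partial_{u_i}$ ($i=0,\dots,3$). $J^2=J^2(\mathbb{C}^{2|2},\mathbb{C}^{1|0})$ is the bundle of Lagrangian subspaces of $(\mathcal C,[d\sigma|_{\mathcal C}])$ with fibre coordinates $u_{ij}=(-1)^{|i||j|}u_{ji}$ (parity $|i|$ of $x^i$), the point $(u_{ij})$ corresponding to the Lagrangian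 subspace spanned by $D_i+\sum_ju_{ij}U^j$. Points and subspaces are understood via the functor of points: for a finite-dimensional supercommutative algebra $\mathbb A$, take $\lambda\in\mathbb A_{\bar0}$, $\theta,\phi\in\mathbb A_{\bar1}$. The field of $(1|2)$-twisted cubics $\mathcal V\subset\mathbb P(\mathcal C)$ of the flat frame consists, at each point, of the rank $(1|0)$ free $\mathbb A$-submodules spanned by $V=D_0-\lambda D_1-\theta D_2-\phi D_3-(\tfrac{\lambda^3}{6}+\lambda\theta\phi)U^0-(\tfrac{\lambda^2}{2}+\theta\phi)U^1-\lambda\phi U^2+\lambda\theta U^3$, together with (Zariski closure) the point at infinity spanned by $U^0$. The affine tangent space of $\mathcal V$ at the super-point spanned by $V$ is the Lagrangian $\mathbb A$-module spanned by $V$ and its derivatives in $\lambda,\theta,\phi$; explicitly it is spanned by $B_0=D_0+(\tfrac{\lambda^3}{3}+2\lambda\theta\phi)U^0+(\tfrac{\lambda^2}{2}+\theta\phi)U^1+\lambda\phi U^2-\lambda\theta U^3$, $B_1=D_1+(\tfrac{\lambda^2}{2}+\theta\phi)U^0+\lambda U^1+\phi U^2-\theta U^3$, $B_2=D_2+\lambda\phi U^0+\phi U^1-\lambda U^3$, $B_3=D_3-\lambda\theta U^0-\theta U^1+\lambda U^2$. $\widehat{\mathcal V}\subset J^2$ is the collection of these affine tangent spaces as the super-point varies along $\mathcal V$ (at all points of $J^1$). *)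

(* Functor-of-points model of J^1, J^2 and E = \hat V
   for J^1(C^{2|2}, C^{1|0}). *)
From HB Require Import structures.
From mathcomp Require Import all_boot all_order all_algebra.
From mathcomp Require Import falgebra.
Set Implicit Arguments. Unset Strict Implicit. Unset Printing Implicit Defensive.
Import Order.TTheory GRing.Theory Num.Theory.
Local Open Scope ring_scope.

Section Super.
Variables (K : fieldType) (A : falgType K).

Definition superComm (A0 A1 : {vspace A}) : Prop :=
  [/\ (A0 + A1 = fullv)%VS, (A0 :&: A1 = 0)%VS & 1 \in A0] /\
  [/\ {in A0 &, forall a b, a * b \in A0},
      {in A0 & A1, forall a b, a * b \in A1},
      {in A1 & A0, forall a b, a * b \in A1} &
      {in A1 &, forall a b, a * b \in A0}] /\
  {in A0, forall a b, a * b = b * a} /\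
  {in A1 &, forall a b, a * b = - (b * a)}.

Variables (A0 A1 : {vspace A}).

(* parity of the coordinate x^i : x^0 = x, x^1 = y even; x^2 = nu, x^3 = tau odd *)
Definition par (i : 'I_4) : bool := (2 <= i)%N.

Definition homog (b : bool) (a : A) : bool := a \in (if b then A1 else A0).

Definition J1pt (X : 'I_4 -> A) (U : A) (P : 'I_4 -> A) : Prop :=
  [/\ forall i, homog (par i) (X i), homog false U & forall i, homog (par i) (P i)].

Definition J2pt (X : 'I_4 -> A) (U : A) (P : 'I_4 -> A) (u : 'I_4 -> 'I_4 -> A) : Prop :=
  J1pt X U P /\ forall i j, homog (par i (+) par j) (u i j) /\
     u i j = (if par i && par j then - u j i else u j i).

(* fibre coordinates u_ij of the Lagrangian subspace spanned by
   B_i = D_i + sum_j u_ij U^j (the affine tangent space at the super-point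
   of the twisted cubic with parameters lambda, theta, phi) *)
Definition uhat (l th ph : A) (i j : 'I_4) : A :=
  match nat_of_ord i, nat_of_ord j with
  | 0, 0 => (3%:R^-1 : K) *: l ^+ 3 + 2%:R * l * th * ph
  | 0, 1 | 1, 0 => (2%:R^-1 : K) *: l ^+ 2 + th * ph
  | 0, 2 | 2, 0 => l * ph
  | 0, 3 | 3, 0 => - (l * th)
  | 1, 1 => l
  | 1, 2 | 2, 1 => ph
  | 1, 3 | 3, 1 => - th
  | 2, 3 => - l
  | 3, 2 => l
  | _, _ => 0
  end.

(* A-points of E = \hat V (affine chart, i.e. away from the point at infinity
   of the cubic, whose tangent space is not in the u_ij chart) *)
Definition inVhat (X : 'I_4 -> A) (U : A) (P : 'I_4 -> A) (u : 'I_4 -> 'I_4 -> A) : Prop :=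
  J1pt X U P /\ exists l th ph, [/\ l \in A0, th \in A1, ph \in A1 &
                                   forall i j, u i j = uhat l th ph i j].

End Super.

Notation i0 := (@Ordinal 4 0 isT).
Notation i1 := (@Ordinal 4 1 isT).
Notation i2 := (@Ordinal 4 2 isT).
Notation i3 := (@Ordinal 4 3 isT).

(* The G(3)-contact super-PDE system (x = x^0, y = x^1, nu = x^2, tau = x^3) *)
Definition G3system (K : fieldType) (A : falgType K) (u : 'I_4 -> 'I_4 -> A) : Prop :=
  [/\ u i0 i0 = (3%:R^-1 : K) *: u i1 i1 ^+ 3 + 2%:R * u i1 i1 * u i1 i2 * u i1 i3,
      u i0 i1 = (2%:R^-1 : K) *: u i1 i1 ^+ 2 + u i1 i2 * u i1 i3,
      u i0 i2 = u i1 i1 * u i1 i2,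
      u i0 i3 = u i1 i1 * u i1 i3
    & u i2 i3 = - u i1 i1].

From mathcomp Require Import all_boot all_order all_algebra falgebra.
Import GRing.Theory.
Local Open Scope ring_scope.

(* The affine tangent space at the super-point (l, th, ph) of the cubic has
   second-order coordinates [uhat l th ph], polynomial in the parameters, with
   u_yy = l, u_ynu = ph and u_ytau = - th.  So the parameters are read off
   from u, all other u_ij are the corresponding polynomials in u_yy, u_ynu,
   u_ytau (the G(3) system), and E is a graph over J^1 with fibre
   A0 x A1 x A1, of dimension (5|4) + (1|2) = (6|6).  Conversely a point of
   J^2 solving the system agrees with that graph above the diagonal, hence
   everywhere by supersymmetry; the odd diagonal entries vanish because
   u_ii = - u_ii there and the characteristic is 0. *)

Lemma ord4_ind (P : 'I_4 -> Prop) : P i0 -> P i1 -> P i2 -> P i3 -> forall i, P i.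
Proof.
move=> P0 P1 P2 P3 [[|[|[|[|i]]]] lti] //; by rewrite (bool_irrelevance lti isT).
Qed.

Lemma eq_oppr_self0 (K : fieldType) (V : lmodType K) (v : V) :
  [pchar K] =i pred0 -> v = - v -> v = 0.
Proof.
move=> charK0 vNv.
have two_neq0 : (2%:R : K) != 0 by rewrite (pcharf0P _).1.
have : (2%:R : K) *: v = 0 by rewrite scaler_nat mulr2n {1}vNv addNr.
by move/(congr1 (fun w => (2%:R : K)^-1 *: w)); rewrite scalerK // scaler0.
Qed.

Section SuperAlgebra.
Variables (K : fieldType) (A : falgType K) (A0 A1 : {vspace A}).
Hypothesis superA : superComm A0 A1.

Lemma homogM b c x y :
  homog A0 A1 b x -> homog A0 A1 c y -> homog A0 A1 (b (+) c) (x * y).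
Proof.
case: superA => _ [[M00 M01 M10 M11] _].
by case: b c => -[] hx hy /=; [exact: M11 | exact: M10 | exact: M01 | exact: M00].
Qed.

Lemma even_nat n : n%:R \in A0.
Proof.
case: superA => -[_ _ one_even] _.
by elim: n => [|n IHn]; rewrite ?mem0v // -addn1 natrD memvD.
Qed.

Lemma even_expr x n : x \in A0 -> x ^+ n \in A0.
Proof.
move=> x_even; elim: n => [|n IHn]; first exact: (even_nat 1).
by rewrite exprS; apply: (homogM false false).
Qed.

Lemma odd_mulC [x y] : x \in A1 -> y \in A1 -> x * y = - (y * x).
Proof. by case: superA => _ [_ [_ anti]]; apply: anti. Qed.

Lemma uhat_homog l th ph i j : l \in A0 -> th \in A1 -> ph \in A1 ->
  homog A0 A1 (par i (+) par j) (uhat l th ph i j).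
Proof.
move=> l_even th_odd ph_odd.
have thph : th * ph \in A0 by apply: (homogM true true).
have lth : l * th \in A1 by apply: (homogM false true).
have lph : l * ph \in A1 by apply: (homogM false true).
have lthph : 2%:R * l * th * ph \in A0.
  rewrite -!mulrA; apply: (homogM false false); first exact: even_nat.
  exact: (homogM false false).
move: i j; apply: ord4_ind; apply: ord4_ind;
  rewrite /homog /par /uhat /= ?memvN ?mem0v //.
all: by apply: memvD => //; apply: memvZ; apply: even_expr.
Qed.

Lemma uhat_sym (l th ph : A) i j :
  uhat l th ph i j = if par i && par j then - uhat l th ph j i else uhat l th ph j i.
Proof.
by move: i j; apply: ord4_ind; apply: ord4_ind; rewrite /uhat /= ?opprK // oppr0.
Qed.

Lemma uhat_G3system l th ph : th \in A1 -> ph \in A1 -> G3system (uhat l th ph).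
Proof.
move=> th_odd ph_odd; have thph := odd_mulC th_odd ph_odd.
rewrite /G3system /uhat /=; split; rewrite ?mulrN //.
- by rewrite -!mulrA thph !mulrN.
- by rewrite thph.
Qed.

Lemma inVhat_J2pt X U P u : inVhat A0 A1 X U P u -> J2pt A0 A1 X U P u.
Proof.
case=> J1 [l [th [ph [l_even th_odd ph_odd u_uhat]]]]; split=> // i j.
by rewrite !u_uhat uhat_homog // -uhat_sym.
Qed.

Lemma inVhat_G3system X U P u : inVhat A0 A1 X U P u -> G3system u.
Proof.
case=> _ [l [th [ph [_ th_odd ph_odd u_uhat]]]].
by rewrite /G3system !u_uhat; apply: uhat_G3system.
Qed.

Lemma uhat_inVhat X U P l th ph : J1pt A0 A1 X U P ->
  l \in A0 -> th \in A1 -> ph \in A1 -> inVhat A0 A1 X U P (uhat l th ph).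
Proof. by move=> J1 l_even th_odd ph_odd; split=> //; exists l, th, ph. Qed.

Lemma inVhat_uhat [X U P u] : inVhat A0 A1 X U P u ->
  forall i j, u i j = uhat (u i1 i1) (- u i1 i3) (u i1 i2) i j.
Proof.
case=> _ [l [th [ph [_ _ _ u_uhat]]]] i j.
by rewrite !u_uhat /uhat /= opprK.
Qed.

Hypothesis charK0 : [pchar K] =i pred0.

Lemma J2pt_odd_diag [X U P u i] : J2pt A0 A1 X U P u -> par i -> u i i = 0.
Proof.
case=> _ u_sym odd_i; apply: eq_oppr_self0 charK0 _.
by have := (u_sym i i).2; rewrite odd_i.
Qed.

Lemma J2pt_G3system_uhat [X U P u] : J2pt A0 A1 X U P u -> G3system u ->
  forall i j, u i j = uhat (u i1 i1) (- u i1 i3) (u i1 i2) i j.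
Proof.
move=> J2u [e00 e01 e02 e03 e23]; case: (J2u) => _ u_sym.
have u12_odd : u i1 i2 \in A1 := (u_sym i1 i2).1.
have u13_odd : u i1 i3 \in A1 := (u_sym i1 i3).1.
have u13u12 : - u i1 i3 * u i1 i2 = u i1 i2 * u i1 i3 by rewrite mulNr -odd_mulC.
suff upper (i j : 'I_4) : (i <= j)%N -> u i j = uhat (u i1 i1) (- u i1 i3) (u i1 i2) i j.
  move=> i j; case: (leqP i j) => [/upper // | /ltnW/upper u_ji].
  by rewrite (u_sym i j).2 uhat_sym u_ji.
move: i j; apply: ord4_ind; apply: ord4_ind => //=; rewrite /uhat /= ?opprK //.
- by rewrite e00 -!mulrA u13u12.
- by rewrite e01 u13u12.
- by rewrite e03 mulrN opprK.
- by rewrite (J2pt_odd_diag J2u).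
- by rewrite (J2pt_odd_diag J2u).
Qed.

Lemma J2pt_G3system_inVhat X U P u :
  J2pt A0 A1 X U P u -> G3system u -> inVhat A0 A1 X U P u.
Proof.
move=> J2u G3u; case: (J2u) => J1 u_sym; split=> //.
exists (u i1 i1), (- u i1 i3), (u i1 i2); split.
- exact: (u_sym i1 i1).1.
- by rewrite memvN; apply: (u_sym i1 i3).1.
- exact: (u_sym i1 i2).1.
- exact: (J2pt_G3system_uhat J2u G3u).
Qed.

End SuperAlgebra.

Theorem theorem4p7 (K : fieldType) (hK : [pchar K] =i pred0)
  (A : falgType K) (A0 A1 : {vspace A}) (hA : superComm A0 A1) :
  (* E is contained in J^2 *)
  (forall X U P u, inVhat A0 A1 X U P u -> J2pt A0 A1 X U P u) /\
  (* E is cut out of J^2 by the G(3)-contact super-PDE system *)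
  (forall X U P u, J2pt A0 A1 X U P u ->
     (inVhat A0 A1 X U P u <-> G3system u)) /\
  (* dimension (6|6): over each A-point of J^1 (dimension (5|4)), the A-points
     of E are freely and uniquely parametrized by (u_yy, u_ynu, u_ytau) in
     A0 x A1 x A1 *)
  (forall X U P, J1pt A0 A1 X U P ->
     forall a b c, a \in A0 -> b \in A1 -> c \in A1 ->
       exists u, inVhat A0 A1 X U P u /\ (u i1 i1, u i1 i2, u i1 i3) = (a, b, c)
       /\ forall u', inVhat A0 A1 X U P u' -> (u' i1 i1, u' i1 i2, u' i1 i3) = (a, b, c) ->
                     forall i j, u' i j = u i j).
Proof.
split; first exact: inVhat_J2pt.
split=> [X U P u J2u | X U P J1 a b c a_even b_odd c_odd].
  by split; [apply: inVhat_G3system | apply: J2pt_G3system_inVhat].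
exists (uhat a (- c) b); split; first by apply: uhat_inVhat; rewrite ?memvN.
split=> [|u' u'_E [<- <- <-]]; first by rewrite /uhat /= opprK.
exact: inVhat_uhat u'_E.
Qed.
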